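(* Let $\sigma$ be a profile of (mixed) strategies in a $k$-player alternating move game, with utility vector $(t_1,\dots,t_k)$. Then for every $\alpha>0$ there exists a cyclic path in the game graph $G$ whose average weight is at least $t_i-\alpha$ in every dimension $i$.
   Context: A $k$-player alternating move game has finite action sets $A_1,\dots,A_k$ and utilities $u_i:A_1\times\dots\times A_k\to[-1,1]$. In round $t$ player $j=1+(t\bmod k)$ chooses an action; the action vector $a^t$ consists of each player's most recent action; in round $t$ player $i$ receives $u_i(a^t)$ (utility $0$ in the first $k$ rounds). A mixed strategy maps histories to distributions over the player's actions. For a profile $\sigma$, $P_{i,t}(\sigma)$ is the expected value of $\frac1t\sum_{s=1}^t u_i(a^s)$, and player $i$'s utility is $t_i=\liminf_{t\to\infty}P_{i,t}(\sigma)$. The game graph $G$ has vertex set $(A_1\times\dots\times A_k)\times\{1,\dots,k\}$; there is an edge from $(\vec a,i)$ to $(\vec b,i+1)$ (with $k+1$ read as $1$) iff $\vec a$ and $\vec b$ differ at most in coordinate $i$, with weight vector $(u_1(\vec b),\dots,u_k(\vec b))$. A cyclic path is a finite path starting and ending at the same vertex; its average weight in dimension $i$ is the sum of the $i$-th weights of its edges divided by its length. *)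

From HB Require Import structures.
From mathcomp Require Import all_boot all_order all_algebra.
From mathcomp Require Import all_classical all_reals all_analysis.
Set Implicit Arguments. Unset Strict Implicit. Unset Printing Implicit Defensive.
Import Order.TTheory GRing.Theory Num.Theory.
Local Open Scope ring_scope.

Section AltGame.
(* Players are 0,...,k-1 (paper's player i+1 is our i); A i = action set of player i. *)
Variables (R : realType) (k : nat) (A : 'I_k -> finType).

Definition profile := {dffun forall i : 'I_k, A i}.
Definition move := {i : 'I_k & A i}.
(* a history: the sequence of moves made so far (oldest first) *)
Definition history := seq move.

Definition strategy (i : 'I_k) := history -> {ffun A i -> R}.
Definition is_distr (i : 'I_k) (d : {ffun A i -> R}) :=
  (forall a, 0 <= d a) /\ \sum_a d a = 1.
Definition is_mixed_profile (sigma : forall i, strategy i) :=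
  forall i h, is_distr (sigma i h).

(* In round t (t = 1,2,...) the player 1+(t mod k) (paper indexing), i.e.
   the player with 0-based index t mod k, moves. *)
Definition mover_ok (t : nat) (m : move) : bool := (nat_of_ord (tag m) == t %% k)%N.

(* probability that the first (size h) moves are exactly h, under sigma;
   computed on the reversed history rh *)
Fixpoint probr (sigma : forall i, strategy i) (rh : seq move) : R :=
  match rh with
  | [::] => 1
  | m :: rh' =>
      probr sigma rh' *
      (if mover_ok (size rh').+1 m then sigma (tag m) (rev rh') (tagged m) else 0)
  end.
Definition prob sigma (h : history) : R := probr sigma (rev h).

Fixpoint lastactr (rh : seq move) (j : 'I_k) : option (A j) :=
  match rh with
  | [::] => None
  | m :: rh' =>
      match tag m =P j with
      | ReflectT e => Some (eq_rect _ (fun x => A x) (tagged m) _ e)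
      | ReflectF _ => lastactr rh' j
      end
  end.
Definition lastact (h : history) (j : 'I_k) := lastactr (rev h) j.

Definition actvec (h : history) : option profile :=
  [pick a : profile | [forall j, lastact h j == Some (a j)]].

Definition round_util (u : forall i : 'I_k, profile -> R) (i : 'I_k)
    (s : nat) (h : history) : R :=
  if (s <= k)%N then 0 else
  match actvec h with Some a => u i a | None => 0 end.

Definition P (u : forall i : 'I_k, profile -> R) (sigma : forall i, strategy i)
    (i : 'I_k) (t : nat) : R :=
  \sum_(h : t.-tuple move)
     prob sigma h * ((t%:R)^-1 * \sum_(1 <= s < t.+1) round_util u i s (take s h)).

Definition game_utility u sigma (i : 'I_k) : \bar R :=
  limn_einf (fun t => (P u sigma i t)%:E).

Definition vertex := (profile * 'I_k)%type.
Definition gedge : rel vertex := fun v w =>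
  ((nat_of_ord w.2 == (v.2).+1 %% k)%N) &&
  [forall j, (j != v.2) ==> (v.1 j == w.1 j)].

(* A cyclic path: start vertex x and nonempty list p of successive vertices,
   forming a G-path from x and ending back at x. Its edges are the steps, and
   the weight of each edge is u(target), so the average weight in dimension i
   is (1/|p|) * sum_{w in p} u_i(w.1). *)
Definition cyclic_path (x : vertex) (p : seq vertex) : bool :=
  (0 < size p)%N && path gedge x p && (last x p == x).
Definition avg_weight (u : forall i : 'I_k, profile -> R) (i : 'I_k)
    (p : seq vertex) : R :=
  (size p)%:R^-1 * \sum_(w <- p) u i w.1.

End AltGame.

(* Fix a base vertex x0 of G and a large horizon T.  Along a history h of
   length T of positive probability, the vertices (a^s, player moving in round
   s+1), k <= s <= T, form a path in G whose edge weights are the round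
   utilities; since any two vertices of G are joined by a path of length at
   most 2k, this path closes up into a cycle through x0 at the cost of O(k)
   extra edges.  Traversing the cycle of each h about M * prob h times yields a
   single cycle through x0 whose average weight is, up to an error
   O(k/T + #histories/M), the expected average utility P_{i,T}(sigma), and
   P_{i,T}(sigma) >= t_i - alpha/2 for T large.  Weights are shifted by 1 to
   make them nonnegative, so that lower bounds on the total weight survive
   division by the cycle length, of which only an upper bound is known. *)

From HB Require Import structures.
From mathcomp Require Import all_boot all_order all_algebra.
From mathcomp Require Import all_classical all_reals all_analysis.
From mathcomp Require Import zify ring lra.
Import Order.TTheory GRing.Theory Num.Theory.
Local Open Scope ring_scope.
Set Implicit Arguments. Unset Strict Implicit. Unset Printing Implicit Defensive.

Section Probability.
Variables (R : realType) (k : nat) (A : 'I_k -> finType).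
Variable sigma : forall i : 'I_k, strategy R A i.
Hypothesis hsigma : is_mixed_profile sigma.

Lemma prob_rcons (h : history A) (m : move A) : prob sigma (rcons h m) =
  prob sigma h * (if mover_ok (size h).+1 m then sigma (tag m) h (tagged m) else 0).
Proof. by rewrite /prob rev_rcons /= revK size_rev. Qed.

Lemma prob_ge0 (h : history A) : 0 <= prob sigma h.
Proof.
elim/last_ind: h => [|h m IH]; first by rewrite /prob /=.
rewrite prob_rcons; apply: mulr_ge0 => //; case: ifP => // _.
exact: (hsigma _ _).1.
Qed.

Lemma prob_neq0_mover_ok (h : history A) (m : move A) (r : nat) :
  prob sigma h != 0 -> (r < size h)%N -> mover_ok r.+1 (nth m h r).
Proof.
elim/last_ind: h r => [//|h m' IH] r.
rewrite prob_rcons size_rcons ltnS leq_eqVlt => hprob /orP [/eqP ->|lt_rh].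
  rewrite nth_rcons ltnn eqxx; move: hprob; case: ifP => //.
  by rewrite mulr0 eqxx.
rewrite nth_rcons lt_rh; apply: IH => //.
by move: hprob; apply: contra => /eqP ->; rewrite mul0r.
Qed.

Variable hk : (0 < k)%N.

Lemma sum_moves_distr (t : nat) (h : history A) :
  \sum_(m : move A) (if mover_ok t m then sigma (tag m) h (tagged m) else 0) = 1.
Proof.
have -> : \sum_(m : move A) (if mover_ok t m then sigma (tag m) h (tagged m) else 0)
   = \sum_(i : 'I_k) \sum_(a : A i) (if (nat_of_ord i == t %% k)%N then sigma i h a else 0).
  rewrite (@sig_big_dep _ 0 _ _ _ xpredT (fun _ => xpredT)
     (fun i a => if (nat_of_ord i == t %% k)%N then sigma i h a else 0)) /=.
  by apply: eq_bigr => -[i a].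
pose i0 : 'I_k := Ordinal (ltn_pmod t hk).
rewrite (bigD1 i0) //= (eq_bigr (fun a => sigma i0 h a)); last by move=> a _; rewrite eqxx.
rewrite (hsigma _ _).2 big1 ?addr0 //.
move=> i /negbTE ne; apply: big1 => a _.
suff -> : (nat_of_ord i == t %% k)%N = false by [].
by apply/negbTE; apply: contraFN ne => /eqP e; apply/eqP/val_inj.
Qed.

Lemma sum_prob_cat (n : nat) (pre : history A) :
  \sum_(t : n.-tuple (move A)) prob sigma (pre ++ t) = prob sigma pre.
Proof.
elim: n pre => [|n IH] pre.
  rewrite (eq_bigr (fun _ => prob sigma pre)); last by move=> t _; rewrite tuple0 cats0.
  by rewrite sumr_const card_tuple expn0 mulr1n.
rewrite (reindex (fun p : move A * n.-tuple (move A) => [tuple of p.1 :: p.2])) /=; last first.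
  exists (fun t : n.+1.-tuple (move A) => (thead t, [tuple of behead t])).
    by move=> [m t] _ /=; congr pair; apply: val_inj.
  by move=> t _; apply: val_inj => /=; rewrite [in RHS](tuple_eta t).
rewrite -(pair_big xpredT xpredT
  (fun m (t : n.-tuple (move A)) => prob sigma (pre ++ m :: t))) /=.
rewrite (eq_bigr (fun m => prob sigma (rcons pre m))); last first.
  by move=> m _; rewrite -(IH (rcons pre m)); apply: eq_bigr => t _; rewrite cat_rcons.
under eq_bigr do rewrite prob_rcons.
by rewrite -mulr_sumr sum_moves_distr mulr1.
Qed.

Lemma sum_prob (n : nat) : \sum_(h : n.-tuple (move A)) prob sigma h = 1.
Proof. exact: (sum_prob_cat n [::]). Qed.

End Probability.

Lemma modnSml (m d : nat) : ((m %% d).+1 = m.+1 %[mod d])%N.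
Proof. by rewrite -addn1 modnDml addn1. Qed.

Section PlayPath.
Variables (R : realType) (k : nat) (hk : (0 < k)%N) (A : 'I_k -> finType).
Variable sigma : forall i : 'I_k, strategy R A i.
Variable a0 : profile A.

Lemma lastactr_cons_neq (m : move A) (l : seq (move A)) (j : 'I_k) :
  tag m != j -> lastactr (m :: l) j = lastactr l j.
Proof. by move=> ne /=; case: (tag m =P j) => // e; rewrite e eqxx in ne. Qed.

Lemma lastactr_neq_None (l : seq (move A)) (j : 'I_k) (m : move A) :
  m \in l -> tag m = j -> lastactr l j != None.
Proof.
elim: l => [//|m' l IH]; rewrite inE => /orP [/eqP <-|ml] tj /=.
  by case: (tag m =P j).
by case: (tag m' =P j) => // _; apply: IH.
Qed.

Lemma actvec_neq_None (h : history A) :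
  (forall j, lastact h j != None) -> actvec h != None.
Proof.
move=> H; rewrite /actvec; case: pickP => // F.
pose a : profile A := finfun (fun j => odflt (a0 j) (lastact h j)).
exfalso; move: (F a) => /= /negbT/negP; apply; apply/forallP => j.
by rewrite /a ffunE; move: (H j); case: (lastact h j).
Qed.

Lemma actvec_lastact (h : history A) (a : profile A) :
  actvec h = Some a -> forall j, lastact h j = Some (a j).
Proof. by rewrite /actvec; case: pickP => // b /forallP H [<-] j; apply/eqP. Qed.

(* The vertex reached after round [s]: the action vector [a^s], tagged with the
   player moving in round [s+1]; [a0] is only a default for an ill-formed history. *)
Definition play_vertex (h : history A) (s : nat) : vertex A :=
  (odflt a0 (actvec (take s h)), Ordinal (ltn_pmod s.+1 hk)).

Definition play_path (h : history A) (s n : nat) : seq (vertex A) :=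
  [seq play_vertex h r | r <- iota s.+1 n].

Lemma actvec_play_vertex (h : history A) (s : nat) :
  prob sigma h != 0 -> (k <= s <= size h)%N ->
  actvec (take s h) = Some (play_vertex h s).1.
Proof.
move=> hprob /andP [ks sh].
suff : actvec (take s h) != None by rewrite /play_vertex /=; case: (actvec _).
apply: actvec_neq_None => j.
(* player [j] moved in round [r+1], where [r = (j - 1) mod k < k <= s] *)
pose r := ((j + k.-1) %% k)%N.
have rk : (r < k)%N by rewrite ltn_mod.
pose m0 : move A := Tagged (fun i => A i) (a0 j).
have rs : (r < size h)%N by apply: leq_trans sh; apply: leq_trans ks.
apply: (@lastactr_neq_None _ _ (nth m0 h r)).
  rewrite mem_rev -(nth_take m0 (leq_trans rk ks)); apply: mem_nth.
  by rewrite size_take; case: ifP => // _; apply: leq_trans ks.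
have /eqP E := prob_neq0_mover_ok m0 hprob rs; apply: val_inj.
by rewrite /= E /r modnSml -addnS prednK // modnDr modn_small.
Qed.

Lemma gedge_play_vertex (h : history A) (s : nat) :
  prob sigma h != 0 -> (k <= s < size h)%N ->
  gedge (play_vertex h s) (play_vertex h s.+1).
Proof.
move=> hprob /andP [ks sh]; rewrite /gedge /= modnSml eqxx /=.
have Ea := actvec_play_vertex hprob (introT andP (conj ks (ltnW sh))).
have Eb := actvec_play_vertex hprob (introT andP (conj (leqW ks) sh)).
pose m0 := Tagged (fun i => A i) (a0 (Ordinal (ltn_pmod s.+1 hk))).
have tm : (tag (nth m0 h s) : nat) = (s.+1 %% k)%N.
  exact/eqP/(prob_neq0_mover_ok m0 hprob sh).
apply/forallP => j; apply/implyP => nej.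
have nej' : tag (nth m0 h s) != j.
  by apply: contra nej => /eqP <-; apply/eqP/val_inj; rewrite /= tm.
change ((play_vertex h s).1 j == (play_vertex h s.+1).1 j).
have Hb := actvec_lastact Eb j.
rewrite /lastact (take_nth m0 sh) rev_rcons lastactr_cons_neq // in Hb.
by have := actvec_lastact Ea j; rewrite /lastact Hb => -[->].
Qed.

Lemma path_play_path (h : history A) (s n : nat) :
  prob sigma h != 0 -> (k <= s)%N -> (s + n <= size h)%N ->
  path (@gedge k A) (play_vertex h s) (play_path h s n).
Proof.
move=> hprob; elim: n s => [//|n IH] s ks sh /=.
rewrite gedge_play_vertex ?ks //=; last first.
  by apply: leq_trans sh; rewrite -addSnnS leq_addr.
by apply: IH; [apply: leqW | rewrite addSnnS].
Qed.

Lemma last_play_path (h : history A) (s n : nat) :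
  last (play_vertex h s) (play_path h s n) = play_vertex h (s + n).
Proof.
elim: n s => [|n IH] s; first by rewrite addn0.
by rewrite /play_path /= -/(play_path h s.+1 n) IH addSnnS.
Qed.

Lemma round_util_play_vertex (u : forall i : 'I_k, profile A -> R) (i : 'I_k)
    (h : history A) (s : nat) :
  prob sigma h != 0 -> (k < s <= size h)%N ->
  round_util u i s (take s h) = u i (play_vertex h s).1.
Proof.
move=> hprob /andP [ks sh]; rewrite /round_util leqNgt ks /=.
by rewrite (actvec_play_vertex hprob) // ltnW.
Qed.

End PlayPath.

Section ConnectingPath.
Variables (k : nat) (hk : (0 < k)%N) (A : 'I_k -> finType).

Definition step_toward (b : profile A) (v : vertex A) : vertex A :=
  ([ffun j => if j == v.2 then b j else v.1 j], Ordinal (ltn_pmod (v.2).+1 hk)).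

Lemma gedge_step_toward (b : profile A) (v : vertex A) : gedge v (step_toward b v).
Proof.
rewrite /gedge /= eqxx /=; apply/forallP => j; apply/implyP => nj.
by rewrite ffunE (negbTE nj).
Qed.

Lemma iter_step_toward (b : profile A) (v : vertex A) (n : nat) :
  ((iter n (step_toward b) v).2 : nat) = ((v.2 + n) %% k)%N /\
  forall (j : 'I_k) (r : nat), (r < n)%N -> ((v.2 + r) %% k)%N = j ->
    (iter n (step_toward b) v).1 j = b j.
Proof.
elim: n => [|n [IH1 IH2]]; first by rewrite addn0 modn_small.
split; first by rewrite iterS /= IH1 modnSml addnS.
move=> j r; rewrite iterS /= ffunE; case: eqP => // nj.
rewrite ltnS leq_eqVlt => /orP [/eqP er|rn] E; last exact: IH2 rn E.
by exfalso; apply: nj; apply: val_inj; rewrite /= IH1 -E er.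
Qed.

(* At least [k] steps, so that every coordinate gets overwritten, and exactly as
   many as needed to arrive at the index [y.2]. *)
Definition connecting_path (v y : vertex A) : seq (vertex A) :=
  traject (step_toward y.1) (step_toward y.1 v) (k + (y.2 + (k - v.2)) %% k).

Lemma path_connecting_path (v y : vertex A) : path (@gedge k A) v (connecting_path v y).
Proof.
by apply: (sub_path _ (fpath_traject _ _ _)) => x z /eqP <-; apply: gedge_step_toward.
Qed.

Lemma last_connecting_path (v y : vertex A) : last v (connecting_path v y) = y.
Proof.
have v2 := ltn_ord v.2; have y2 := ltn_ord y.2.
rewrite /connecting_path last_traject.
have [I1 I2] := iter_step_toward y.1 v (k + (y.2 + (k - v.2)) %% k).
case: y I1 I2 y2 => b j /= I1 I2 y2; apply: injective_projections => /=.
  apply/ffunP => j'; apply: (I2 _ ((j' + (k - v.2)) %% k)%N).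
    exact: leq_trans (ltn_pmod _ hk) (leq_addr _ _).
  rewrite modnDmr; have -> : (v.2 + (j' + (k - v.2)) = j' + k)%N by lia.
  by rewrite modnDr modn_small.
apply: val_inj; rewrite /= I1 addnA modnDmr.
have -> : (v.2 + k + (j + (k - v.2)) = j + k + k)%N by lia.
by rewrite !modnDr modn_small.
Qed.

Lemma size_connecting_path (v y : vertex A) :
  (0 < size (connecting_path v y) <= 2 * k)%N.
Proof.
rewrite size_traject (leq_trans hk (leq_addr _ _)) /= mul2n -addnn leq_add2l.
exact: ltnW (ltn_pmod _ hk).
Qed.

End ConnectingPath.

Section ExpectedUtility.
Variables (R : realType) (k : nat) (A : 'I_k -> finType).
Variable u : forall i : 'I_k, profile A -> R.
Hypothesis hu : forall i a, -1 <= u i a <= 1.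
Variable sigma : forall i : 'I_k, strategy R A i.

Definition cum_util (i : 'I_k) (t : nat) (h : history A) : R :=
  \sum_(1 <= s < t.+1) round_util u i s (take s h).

Lemma round_util_bound (i : 'I_k) (s : nat) (h : history A) :
  -1 <= round_util u i s h <= 1.
Proof.
rewrite /round_util; case: ifP => _; first by rewrite lerN10 ler01.
by case: (actvec h) => [a|]; [exact: hu | rewrite lerN10 ler01].
Qed.

Lemma cum_util_le (i : 'I_k) (t : nat) (h : history A) : cum_util i t h <= t%:R.
Proof.
rewrite /cum_util (@le_trans _ _ (\sum_(1 <= s < t.+1) (1 : R))) //.
  by apply: ler_sum => s _; case/andP: (round_util_bound i s (take s h)).
by rewrite sumr_const_nat subn1.
Qed.

Lemma cum_util_late (i : 'I_k) (t : nat) (h : history A) : (k <= t)%N ->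
  cum_util i t h = \sum_(k.+1 <= s < t.+1) round_util u i s (take s h).
Proof.
move=> kt; rewrite /cum_util (@big_cat_nat _ _ _ k.+1) //= big_nat big1 ?add0r //.
by move=> s /andP [_ sk]; rewrite /round_util -ltnS sk.
Qed.

Lemma cum_util_ge (i : 'I_k) (t : nat) (h : history A) : (k <= t)%N ->
  - (t - k)%:R <= cum_util i t h.
Proof.
move=> kt; rewrite cum_util_late //.
rewrite (@le_trans _ _ (\sum_(k.+1 <= s < t.+1) (-1 : R))) //.
  by rewrite sumr_const_nat subSS mulNrn.
by apply: ler_sum => s _; case/andP: (round_util_bound i s (take s h)).
Qed.

Lemma P_le1 (hk : (0 < k)%N) (hsigma : is_mixed_profile sigma) (i : 'I_k) (t : nat) :
  P u sigma i t <= 1.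
Proof.
rewrite /P -[X in _ <= X](sum_prob hsigma hk t); apply: ler_sum => h _.
rewrite -[X in _ <= X]mulr1; apply: ler_wpM2l; first exact: prob_ge0.
case: t h => [|t] h; first by rewrite invr0 mul0r ler01.
by rewrite ler_pdivrMl ?ltr0Sn // mulr1 cum_util_le.
Qed.

Lemma P_cum_util (i : 'I_k) (t : nat) : (0 < t)%N ->
  t%:R * P u sigma i t = \sum_(h : t.-tuple (move A)) prob sigma h * cum_util i t h.
Proof.
move=> t0; rewrite /P mulr_sumr; apply: eq_bigr => h _.
by rewrite mulrA mulrCA mulrA mulKf // pnatr_eq0 -lt0n.
Qed.

End ExpectedUtility.

Lemma limn_einf_ev_ge (R : realType) (f : nat -> R) (c e : R) :
  (forall n, f n <= c) -> 0 < e ->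
  exists N, forall n, (N <= n)%N -> (limn_einf (fun n => (f n)%:E) - e%:E <= (f n)%:E)%E.
Proof.
move=> fc e0; set v := (fun n => (f n)%:E).
have L : limn_einf v = ereal_sup (range (einfs v)).
  by rewrite limn_einf_lim; apply: cvg_lim => //; exact: cvg_einfs_sup.
have einfs_le N n : (N <= n)%N -> (einfs v N <= v n)%E.
  by move=> Nn; apply: ereal_inf_lbound; exists n.
case E : (limn_einf v) => [r| |].
- have : ((r - e)%:E < ereal_sup (range (einfs v)))%E.
    by rewrite -L E lte_fin ltrBlDr ltrDl.
  move=> /ereal_sup_gt [y [N _ <-]] Hy; exists N => n Nn.
  by rewrite -EFinB; apply/ltW/(lt_le_trans Hy)/einfs_le.
- have : (limn_einf v <= c%:E)%E.
    rewrite L; apply: ge_ereal_sup => y [N _ <-].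
    by apply: (le_trans (einfs_le N N (leqnn N))); rewrite lee_fin.
  by rewrite E.
- by exists 0%N => n _; rewrite leNye.
Qed.

Lemma shifted_average_ge (F : realFieldType) (S N m t kk hh p a : F) :
  0 < a -> 0 < N -> 0 <= S -> 0 <= t -> 0 <= kk -> 0 <= m -> p <= 1 ->
  28 * kk <= a * t -> 8 * hh <= a * m -> N <= m * (t + 3 * kk) ->
  m * (t * p + (t - kk)) - hh * (2 * t) <= S ->
  p - a / 2 <= S / N - 1.
Proof.
move=> a_gt0 N0 S0 t0 k0 m0 p1 hT hM hN hS.
rewrite lerBrDr ler_pdivlMr //.
have [c0|c0] := leP 0 (p - a / 2 + 1); last first.
  exact: le_trans (mulr_le0_ge0 (ltW c0) (ltW N0)) S0.
apply: le_trans (ler_wpM2l c0 hN) (le_trans _ hS).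
(* the budget [a/2] is spent as [a/4] on each of the two error terms *)
have h1 : 0 <= m * kk * (1 - p) by rewrite !mulr_ge0 // subr_ge0.
have h2 : 0 <= m * (a * t - 28 * kk) by rewrite mulr_ge0 // subr_ge0.
have h3 : 0 <= t * (a * m - 8 * hh) by rewrite mulr_ge0 // subr_ge0.
have h4 : 0 <= a * m * kk by rewrite !mulr_ge0 ?(ltW a_gt0).
nra.
Qed.

Lemma closed_walk_flatten (T : eqType) (e : rel T) (x : T) (bs : seq (seq T)) :
  (forall b, b \in bs -> path e x b && (last x b == x)) ->
  path e x (flatten bs) && (last x (flatten bs) == x).
Proof.
elim: bs => [|b bs IH] H /=; first by rewrite eqxx.
have /andP [pb /eqP lb] := H b (mem_head _ _).
have /andP [pr lr] := IH (fun b' bb' => H b' (mem_behead (s := b :: bs) bb')).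
by rewrite cat_path pb lb pr last_cat lb lr.
Qed.

Lemma sumr1_size (R : pzSemiRingType) (T : Type) (s : seq T) :
  \sum_(v <- s) (1 : R) = (size s)%:R.
Proof. by rewrite -sum1_size natr_sum. Qed.

Section CycleConstruction.
Variables (R : realType) (k : nat) (hk : (0 < k)%N) (A : 'I_k -> finType).
Variable u : forall i : 'I_k, profile A -> R.
Hypothesis hu : forall i a, -1 <= u i a <= 1.
Variable sigma : forall i : 'I_k, strategy R A i.
Hypothesis hsigma : is_mixed_profile sigma.
Variable a0 : profile A.
Variables (T M : nat).
Hypothesis kT : (k < T)%N.

Definition base_vertex : vertex A := (a0, Ordinal hk).

Definition history_cycle (h : history A) : seq (vertex A) :=
  connecting_path hk base_vertex (play_vertex hk a0 h k) ++
  play_path hk a0 h k (T - k) ++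
  connecting_path hk (play_vertex hk a0 h T) base_vertex.

Definition copies (h : T.-tuple (move A)) : nat := Num.truncn (M%:R * prob sigma h).

Definition big_cycle : seq (vertex A) :=
  flatten [seq history_cycle h | h : T.-tuple (move A) <-
           flatten [seq nseq (copies h) h | h <- enum {: T.-tuple (move A)}]].

Lemma copies_gt0_prob (h : T.-tuple (move A)) : (0 < copies h)%N -> prob sigma h != 0.
Proof. by rewrite /copies truncn_gt0; apply: contraTneq => ->; rewrite mulr0 ler10. Qed.

Lemma history_cycle_closed (h : history A) : prob sigma h != 0 -> size h = T ->
  path (@gedge k A) base_vertex (history_cycle h) &&
  (last base_vertex (history_cycle h) == base_vertex).
Proof.
move=> hprob sh.
have ph : path (@gedge k A) (play_vertex hk a0 h k) (play_path hk a0 h k (T - k)).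
  by apply: (path_play_path _ _ hprob) => //; rewrite sh subnKC // ltnW.
have lh : last (play_vertex hk a0 h k) (play_path hk a0 h k (T - k)) =
          play_vertex hk a0 h T.
  by rewrite last_play_path subnKC // ltnW.
rewrite /history_cycle !cat_path !last_cat !last_connecting_path ph lh.
by rewrite !path_connecting_path last_connecting_path eqxx.
Qed.

Lemma big_cycle_closed :
  path (@gedge k A) base_vertex big_cycle && (last base_vertex big_cycle == base_vertex).
Proof.
apply: closed_walk_flatten => b /mapP [h /flattenP [s /mapP [h' _ ->]]].
rewrite mem_nseq => /andP [n0 /eqP -> ->].
by apply: history_cycle_closed; [exact: copies_gt0_prob | exact: size_tuple].
Qed.

Lemma sum_big_cycle (g : vertex A -> R) :
  \sum_(v <- big_cycle) g v =
  \sum_(h : T.-tuple (move A)) (copies h)%:R * \sum_(v <- history_cycle h) g v.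
Proof.
rewrite big_flatten /= big_map big_flatten /= big_map big_enum /=.
by apply: eq_bigr => h _; rewrite big_nseq iter_addr_0 mulr_natl.
Qed.

Lemma size_history_cycle (h : history A) : (0 < size (history_cycle h) <= T + 3 * k)%N.
Proof.
have /andP [c1 c1'] := size_connecting_path hk base_vertex (play_vertex hk a0 h k).
have /andP [_ c2] := size_connecting_path hk (play_vertex hk a0 h T) base_vertex.
rewrite /history_cycle !size_cat size_map size_iota; lia.
Qed.

Lemma history_cycle_weight (i : 'I_k) (h : history A) : prob sigma h != 0 -> size h = T ->
  cum_util u i T h + (T - k)%:R <= \sum_(v <- history_cycle h) (u i v.1 + 1).
Proof.
move=> hprob sh.
have f0 (v : vertex A) : 0 <= u i v.1 + 1.
  by case/andP: (hu i v.1) => H _; rewrite -lerBlDr sub0r.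
rewrite /history_cycle !big_cat /=.
have -> : \sum_(v <- play_path hk a0 h k (T - k)) (u i v.1 + 1) =
          cum_util u i T h + (T - k)%:R.
  rewrite big_map big_split sumr1_size size_iota (cum_util_late _ _ _ (ltnW kT)).
  congr (_ + _); rewrite -[iota _ _]/(index_iota k.+1 T.+1).
  apply: eq_big_nat => s /andP [ks sT].
  by rewrite (round_util_play_vertex hk a0 u i hprob) // ks sh -ltnS.
by rewrite addrCA lerDl addr_ge0 // sumr_ge0.
Qed.

Lemma sum_copies_le : \sum_(h : T.-tuple (move A)) (copies h)%:R <= M%:R :> R.
Proof.
apply: (@le_trans _ _ (\sum_(h : T.-tuple (move A)) M%:R * prob sigma h)).
  by apply: ler_sum => h _; rewrite /copies truncn_le mulr_ge0 // prob_ge0.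
by rewrite -mulr_sumr (sum_prob hsigma hk) mulr1.
Qed.

Lemma sum_copies_gt :
  M%:R - #|{: T.-tuple (move A)}|%:R < \sum_(h : T.-tuple (move A)) (copies h)%:R :> R.
Proof.
have -> : M%:R - #|{: T.-tuple (move A)}|%:R =
          \sum_(h : T.-tuple (move A)) (M%:R * prob sigma h - 1) :> R.
  by rewrite sumrB -mulr_sumr (sum_prob hsigma hk) mulr1 sumr_const.
apply: ltr_sum => [|h _]; last by rewrite ltrBlDr natr1 truncnS_gt.
by apply/hasP; exists (nseq_tuple T (Tagged (fun j => A j) (a0 (Ordinal hk)))).
Qed.

Lemma size_big_cycle_le : (size big_cycle)%:R <= M%:R * (T + 3 * k)%:R :> R.
Proof.
rewrite -sumr1_size sum_big_cycle.
apply: le_trans (ler_wpM2r (ler0n _ _) sum_copies_le); rewrite mulr_suml.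
apply: ler_sum => h _; apply: ler_wpM2l => //.
by rewrite sumr1_size ler_nat; case/andP: (size_history_cycle h).
Qed.

Lemma size_big_cycle_gt0 : (#|{: T.-tuple (move A)}| <= M)%N -> (0 < size big_cycle)%N.
Proof.
move=> HleM; rewrite -(ltr0n R) -sumr1_size sum_big_cycle.
apply: lt_le_trans (le_lt_trans _ sum_copies_gt) _; first by rewrite subr_ge0 ler_nat.
apply: ler_sum => h _; rewrite -[X in X <= _]mulr1; apply: ler_wpM2l => //.
by rewrite sumr1_size ler1n; case/andP: (size_history_cycle h).
Qed.

Lemma big_cycle_weight_ge (i : 'I_k) :
  M%:R * (T%:R * P u sigma i T + (T - k)%:R) - #|{: T.-tuple (move A)}|%:R * (2 * T%:R)
  <= \sum_(v <- big_cycle) (u i v.1 + 1).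
Proof.
pose g h := cum_util u i T h + (T - k)%:R.
have g_ge0 h : 0 <= g h by rewrite /g -lerBlDr sub0r cum_util_ge // ltnW.
have g_le h : g h <= 2 * T%:R.
  by rewrite /g mulr2n mulrDl mul1r lerD ?cum_util_le // ler_nat leq_subr.
have -> : M%:R * (T%:R * P u sigma i T + (T - k)%:R) =
          M%:R * \sum_(h : T.-tuple (move A)) prob sigma h * g h.
  congr (_ * _); rewrite (P_cum_util u sigma i (ltn_trans hk kT)) /g.
  under [X in _ = X]eq_bigr do rewrite mulrDr.
  by rewrite big_split /= -mulr_suml (sum_prob hsigma hk) mul1r.
have -> : #|{: T.-tuple (move A)}|%:R * (2 * T%:R) =
          \sum_(h : T.-tuple (move A)) 2 * T%:R :> R.
  by rewrite sumr_const mulr_natl.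
rewrite mulr_sumr -sumrB sum_big_cycle; apply: ler_sum => h _.
apply: le_trans (_ : (copies h)%:R * g h <= _).
  rewrite mulrA lerBlDr -lerBlDl -mulrBl (le_trans _ (g_le h)) //.
  rewrite -[X in _ <= X]mul1r ler_wpM2r // lerBlDl natr1.
  exact/ltW/truncnS_gt.
have [->|pos] := posnP (copies h); first by rewrite !mul0r.
apply: ler_wpM2l => //; apply: history_cycle_weight; last exact: size_tuple.
exact: copies_gt0_prob.
Qed.

Lemma avg_weight_big_cycle (i : 'I_k) (a : R) : 0 < a ->
  28 * k%:R <= a * T%:R -> 8 * #|{: T.-tuple (move A)}|%:R <= a * M%:R ->
  (#|{: T.-tuple (move A)}| <= M)%N ->
  P u sigma i T - a / 2 <= avg_weight u i big_cycle.
Proof.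
move=> a_gt0 hT hM HleM.
have N0 : 0 < (size big_cycle)%:R :> R by rewrite ltr0n size_big_cycle_gt0.
have -> : avg_weight u i big_cycle =
    (\sum_(v <- big_cycle) (u i v.1 + 1)) / (size big_cycle)%:R - 1.
  by rewrite /avg_weight big_split /= sumr1_size; field; rewrite gt_eqF.
have hN := size_big_cycle_le; rewrite natrD natrM in hN.
have hS := big_cycle_weight_ge i; rewrite natrB 1?ltnW // in hS.
apply: (shifted_average_ge a_gt0 N0 _ (ler0n _ _) (ler0n _ _) (ler0n _ _)
          (P_le1 hu hk hsigma i T) hT hM hN hS).
by apply: sumr_ge0 => v _; case/andP: (hu i v.1) => H _; rewrite -lerBlDr sub0r.
Qed.

End CycleConstruction.

Lemma exists_nat_mul_ge (F : archiRealFieldType) (a c : F) (n0 : nat) :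
  0 < a -> exists2 n, (n0 <= n)%N & c <= a * n%:R.
Proof.
move=> a_gt0; exists (maxn n0 (Num.truncn (c / a)).+1); first exact: leq_maxl.
rewrite mulrC -ler_pdivrMr //; apply/ltW/(lt_le_trans (truncnS_gt _)).
by rewrite ler_nat leq_maxr.
Qed.

Lemma mixed_profile_inhabited (R : realType) (k : nat) (A : 'I_k -> finType)
    (sigma : forall i : 'I_k, strategy R A i) :
  is_mixed_profile sigma -> inhabited (profile A).
Proof.
move=> hsigma.
have ex_a i : exists a : A i, true.
  case: (pickP (fun _ : A i => true)) => [a _|none]; first by exists a.
  have := (hsigma i [::]).2; rewrite big1 => [/eqP|a _]; last by have := none a.
  by rewrite eq_sym oner_eq0.
by constructor; exact: [ffun i => xchoose (ex_a i)].
Qed.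

Theorem lemma6 (R : realType) (k : nat) (hk : (0 < k)%N) (A : 'I_k -> finType)
    (u : forall i : 'I_k, profile A -> R)
    (hu : forall i a, -1 <= u i a <= 1)
    (sigma : forall i : 'I_k, strategy R A i)
    (hsigma : is_mixed_profile sigma)
    (alpha : R) (halpha : 0 < alpha) :
  exists (x : vertex A) (p : seq (vertex A)),
    cyclic_path x p /\
    forall i : 'I_k,
      (game_utility u sigma i - alpha%:E <= (avg_weight u i p)%:E)%E.
Proof.
have [a0] := mixed_profile_inhabited hsigma.
have ha2 : 0 < alpha / 2 by rewrite divr_gt0.
have ev i : exists N, forall n, (N <= n)%N ->
    (game_utility u sigma i - (alpha / 2)%:E <= (P u sigma i n)%:E)%E.
  exact: limn_einf_ev_ge (P_le1 hu hk hsigma i) ha2.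
have [Nf HNf] := choice ev.
have [T NT hT] := exists_nat_mul_ge (28 * k%:R) (maxn k.+1 (\max_i Nf i)) halpha.
have kT : (k < T)%N := leq_trans (leq_maxl _ _) NT.
pose H := #|{: T.-tuple (move A)}|.
have [M HleM hM] := exists_nat_mul_ge (8 * H%:R) H halpha.
exists (base_vertex hk a0), (big_cycle hk sigma a0 T M); split.
  by rewrite /cyclic_path size_big_cycle_gt0 // big_cycle_closed.
move=> i; have avg_ge := avg_weight_big_cycle hk hu hsigma a0 kT i halpha hT hM HleM.
have := HNf i T (leq_trans (leq_bigmax i) (leq_trans (leq_maxr _ _) NT)).
case: (game_utility u sigma i) => [r| |] //=; rewrite ?leNye // -!EFinB !lee_fin.
by move=> Hr; rewrite [alpha]splitr opprD addrA; apply: le_trans avg_ge; exact: lerB.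
Qed.
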